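(* Let $k\ge 1$, $\alpha=(\alpha_1,\dots,\alpha_k)\in\mathbb{N}^k$ and $\sigma\in S_k$ a permutation of $\{1,\dots,k\}$. Then for every finite simple undirected graph, $$w_{\alpha_1+\alpha_{\sigma(1)}}\cdots w_{\alpha_k+\alpha_{\sigma(k)}}\le w_{2\alpha_1}\cdots w_{2\alpha_k}.$$
   Context: $\mathbb{N}$ denotes the nonnegative integers. For $j\in\mathbb{N}$, $w_j$ denotes the total number of walks of length $j$ in the graph (a walk is a sequence of vertices in which consecutive vertices are adjacent; vertices and edges may repeat; the length is the number of edges). *)

From mathcomp Require Import all_boot all_order all_algebra all_fingroup.
Set Implicit Arguments. Unset Strict Implicit. Unset Printing Implicit Defensive.

Definition simple_graph (T : finType) (e : rel T) : Prop :=
  symmetric e /\ irreflexive e.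

Definition is_walk (T : finType) (e : rel T) (j : nat) (t : j.+1.-tuple T) : bool :=
  path e (thead t) (behead t).

Definition nwalks (T : finType) (e : rel T) (j : nat) : nat :=
  #|[set t : j.+1.-tuple T | is_walk e t]|.

From mathcomp Require Import all_boot all_order all_algebra all_fingroup.
Set Implicit Arguments. Unset Strict Implicit.

(* Writing [w_j(u)] for the number of walks of length [j] starting at [u], splitting a
   walk of length [a + b] at its [a]-th vertex and reversing the first part (the graph
   is undirected) gives [w_(a+b) = sum_x w_a(x) w_b(x)].  By Cauchy-Schwarz,
   [w_(a+b)^2 <= w_(2a) w_(2b)]; multiplying these inequalities for [a = alpha_i],
   [b = alpha_(sigma i)] and reindexing by [sigma] yields the square of the claim. *)

Lemma nat_Cauchy_Schwarz (I : finType) (f g : I -> nat) :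
  (\sum_x f x * g x) ^ 2 <= (\sum_x f x ^ 2) * (\sum_x g x ^ 2).
Proof.
rewrite -(leq_pmul2l (isT : 0 < 2)).
have -> : (\sum_x f x * g x) ^ 2 = \sum_x \sum_y (f x * g y) * (f y * g x).
  rewrite -mulnn big_distrl; apply: eq_bigr => x _; rewrite big_distrr; apply: eq_bigr => y _ /=.
  by rewrite mulnACA [RHS]mulnACA (mulnC (g y)).
have -> : 2 * ((\sum_x f x ^ 2) * (\sum_x g x ^ 2)) =
    \sum_x \sum_y ((f x * g y) ^ 2 + (f y * g x) ^ 2).
  under [RHS]eq_bigr do rewrite big_split.
  rewrite big_split /= mul2n -addnn; congr addn; [|rewrite exchange_big];
    rewrite big_distrl; apply: eq_bigr => x _; rewrite big_distrr;
    by apply: eq_bigr => y _; rewrite expnMn.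
rewrite big_distrr leq_sum // => x _; rewrite big_distrr leq_sum // => y _.
exact: (nat_Cauchy _ _).1.
Qed.

Lemma leq_prod_of_sqr_perm (I : finType) (sigma : {perm I}) (f g : I -> nat) :
  (forall i, g i ^ 2 <= f i * f (sigma i)) -> \prod_i g i <= \prod_i f i.
Proof.
move=> le_g; rewrite -(leq_exp2r _ _ (isT : 0 < 2)).
have -> : (\prod_i g i) ^ 2 = \prod_i g i ^ 2 by rewrite big_split.
apply: leq_trans (leq_prod (fun i _ => le_g i)) _.
have f_sigma : \prod_i f (sigma i) = \prod_i f i.
  by rewrite [RHS](reindex_inj (@perm_inj _ sigma)).
by rewrite big_split /= f_sigma mulnn.
Qed.

Lemma big_tupleS (R : Type) (idx : R) (op : Monoid.com_law idx) (T : finType) n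
    (F : n.+1.-tuple T -> R) :
  \big[op/idx]_(t : n.+1.-tuple T) F t =
  \big[op/idx]_(x : T) \big[op/idx]_(t : n.-tuple T) F [tuple of x :: t].
Proof.
rewrite pair_big /= (reindex (fun p : T * n.-tuple T => [tuple of p.1 :: p.2])) //=.
exists (fun t : n.+1.-tuple T => (thead t, [tuple of behead t])).
  by case=> x t _; congr pair; apply: val_inj.
by move=> t _; case/tupleP: t => x t; apply: val_inj.
Qed.

Lemma card_set_sum (T : finType) (P : pred T) : #|[set t | P t]| = \sum_t P t.
Proof.
by rewrite -sum1_card big_mkcond /=; apply: eq_bigr => t _; rewrite inE; case: (P t).
Qed.

Section Walks.
Variables (T : finType) (e : rel T).

(* The [(u, v)] entry of the [j]-th power of the adjacency matrix. *)
Fixpoint nwalks_between j u v : nat :=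
  if j is j'.+1 then \sum_x e u x * nwalks_between j' x v else u == v.

Definition nwalks_from j u := \sum_v nwalks_between j u v.

Lemma nwalks_fromS j u : nwalks_from j.+1 u = \sum_x e u x * nwalks_from j x.
Proof.
by rewrite /nwalks_from exchange_big; apply: eq_bigr => x _; rewrite big_distrr.
Qed.

Lemma is_walk_cons j x (t : j.+1.-tuple T) :
  is_walk e [tuple of x :: t] = e x (thead t) && is_walk e t.
Proof. by case/tupleP: t. Qed.

Lemma sum_walks_from j u :
  \sum_(t : j.+1.-tuple T) (is_walk e t && (thead t == u)) = nwalks_from j u.
Proof.
elim: j u => [|j IH] u.
  rewrite big_tupleS /nwalks_from; apply: eq_bigr => x _.
  rewrite (big_pred1 [tuple]) => [|t]; last by apply/esym/eqP/tuple0.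
  by rewrite /= [u == x]eq_sym.
rewrite big_tupleS (bigD1 u) //= [X in _ + X]big1 ?addn0 => [|x /negbTE neq_xu]; last first.
  by apply: big1 => t _; rewrite /= neq_xu andbF.
under eq_bigr do rewrite is_walk_cons /= eqxx andbT.
rewrite nwalks_fromS; under [RHS]eq_bigr do rewrite -IH big_distrr.
rewrite exchange_big; apply: eq_bigr => t _ /=.
rewrite (bigD1 (thead t)) //= eqxx andbT big1 ?addn0 => [|y /= /negbTE neq_yt].
  by case: (e _ _); case: (is_walk _ _).
by rewrite eq_sym neq_yt andbF muln0.
Qed.

Lemma nwalksE j : nwalks e j = \sum_u nwalks_from j u.
Proof.
rewrite /nwalks card_set_sum; under [RHS]eq_bigr do rewrite -sum_walks_from.
rewrite exchange_big; apply: eq_bigr => t _.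
rewrite (bigD1 (thead t)) //= eqxx andbT big1 ?addn0 // => u /= /negbTE neq_ut.
by rewrite eq_sym neq_ut andbF.
Qed.

Lemma nwalks_betweenD a b u v :
  nwalks_between (a + b) u v = \sum_x nwalks_between a u x * nwalks_between b x v.
Proof.
elim: a u => [|a IH] u.
  rewrite (bigD1 u) //= eqxx mul1n big1 ?addn0 // => x /= /negbTE neq_xu.
  by rewrite eq_sym neq_xu.
rewrite addSn /=; under eq_bigr do rewrite IH big_distrr.
under [RHS]eq_bigr do rewrite big_distrl.
rewrite exchange_big /=; apply: eq_bigr => x _; apply: eq_bigr => y _.
by rewrite mulnA.
Qed.

Lemma nwalks_between1 u v : nwalks_between 1 u v = e u v.
Proof.
rewrite /= (bigD1 v) //= eqxx muln1 big1 ?addn0 // => y /= /negbTE neq_yv.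
by rewrite neq_yv muln0.
Qed.

Hypothesis e_sym : symmetric e.

Lemma nwalks_betweenC j u v : nwalks_between j u v = nwalks_between j v u.
Proof.
elim: j u v => [|j IH] u v; first by rewrite /= eq_sym.
rewrite -[in RHS]addn1 [RHS]nwalks_betweenD; apply: eq_bigr => x _.
by rewrite nwalks_between1 IH e_sym mulnC.
Qed.

Lemma nwalksD a b : nwalks e (a + b) = \sum_x nwalks_from a x * nwalks_from b x.
Proof.
rewrite nwalksE /nwalks_from; under eq_bigr do under eq_bigr do rewrite nwalks_betweenD.
under eq_bigr do rewrite exchange_big; rewrite exchange_big.
apply: eq_bigr => x _; rewrite big_distrl; apply: eq_bigr => u _.
by rewrite big_distrr nwalks_betweenC.
Qed.

Lemma nwalksD_sqr_leq a b : nwalks e (a + b) ^ 2 <= nwalks e (a + a) * nwalks e (b + b).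
Proof.
rewrite !nwalksD; under [X in _ <= X * _]eq_bigr do rewrite mulnn.
under [X in _ <= _ * X]eq_bigr do rewrite mulnn.
exact: nat_Cauchy_Schwarz.
Qed.

End Walks.

Theorem theorem3 (k : nat) (hk : 1 <= k) (alpha : 'I_k -> nat) (sigma : 'S_k)
    (T : finType) (e : rel T) (he : simple_graph e) :
  \prod_(i < k) nwalks e (alpha i + alpha (sigma i))
  <= \prod_(i < k) nwalks e (2 * alpha i).
Proof.
have [e_sym _] := he.
apply: (leq_prod_of_sqr_perm (sigma := sigma)) => i.
by rewrite !mul2n -!addnn nwalksD_sqr_leq.
Qed.
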